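(* Let $E^+$ be a valuation ring of finite rank with fraction field $E$, and let $M$ be a torsionfree $E^+$-module such that $M\otimes_{E^+}E$ is a finite-dimensional $E$-vector space. Then the $E^+/p$-module $M/p$ is a countable filtered colimit of free $E^+/p$-modules of rank at most $\dim_E(M\otimes_{E^+}E)$. In particular, $M/p$ has projective dimension at most $1$ as an $E^+/p$-module.
   Context: $p$ is a prime. The rank of a valuation ring is its number of nonzero prime ideals. *)

From HB Require Import structures.
From mathcomp Require Import all_boot all_order all_algebra fraction.
Set Implicit Arguments.
Unset Strict Implicit.
Unset Printing Implicit Defensive.
Import Order.TTheory GRing.Theory Num.Theory.
Local Open Scope ring_scope.

Definition in_ring (R : idomainType) (x : {fraction R}) : Prop :=
  exists a : R, x = @FracField.tofrac R a.

Definition valuation_ring (R : idomainType) : Prop :=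
  forall x : {fraction R}, x != 0 -> in_ring x \/ in_ring x^-1.

Definition prime_ideal (R : idomainType) (I : R -> Prop) : Prop :=
  [/\ I 0,
      forall a b, I a -> I b -> I (a + b),
      forall r a, I a -> I (r * a),
      ~ I 1 &
      forall a b, I (a * b) -> I a \/ I b].

Definition nonzero_prime_ideal (R : idomainType) (I : R -> Prop) : Prop :=
  prime_ideal I /\ exists a, I a /\ a != 0.

(* finite rank: there are only finitely many nonzero prime ideals *)
Definition finite_rank (R : idomainType) : Prop :=
  exists (n : nat) (J : nat -> R -> Prop),
    forall I : R -> Prop, nonzero_prime_ideal I ->
      exists k, (k < n)%N /\ forall x, I x <-> J k x.

Definition torsionfree (R : idomainType) (M : lmodType R) : Prop :=
  forall (r : R) (m : M), r *: m = 0 -> r = 0 \/ m = 0.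

(* dim_E (M (x)_R E) = d, E = Frac(R), M torsionfree:
   there are m_0,...,m_{d-1} in M whose images m_k (x) 1 form an E-basis of
   M (x)_R E = S^{-1} M (S = R \ {0}), written out after clearing
   denominators: they are R-linearly independent, and every element of M
   becomes an R-linear combination of them after multiplication by a
   nonzero scalar. *)
Definition tensor_frac_dim (R : idomainType) (M : lmodType R) (d : nat) : Prop :=
  exists m : 'I_d -> M,
    (forall r : 'I_d -> R, \sum_(k < d) r k *: m k = 0 -> forall k, r k = 0) /\
    (forall x : M, exists (s : R) (r : 'I_d -> R),
        s != 0 /\ s *: x = \sum_(k < d) r k *: m k).

Definition lin (A : comPzRingType) (U V : lmodType A) (f : U -> V) : Prop :=
  forall (a : A) (x y : U), f (a *: x + y) = a *: f x + f y.

Definition projective_mod (A : comPzRingType) (P : lmodType A) : Prop :=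
  forall (X Y : lmodType A) (s : X -> Y) (h : P -> Y),
    lin s -> (forall y, exists x, s x = y) -> lin h ->
    exists l : P -> X, lin l /\ forall u, s (l u) = h u.

Definition projdim_le1 (A : comPzRingType) (N : lmodType A) : Prop :=
  exists (P1 P0 : lmodType A) (f : P1 -> P0) (g : P0 -> N),
    [/\ projective_mod P1 /\ projective_mod P0, lin f /\ lin g,
        injective f, (forall y, exists x, g x = y) &
        forall x, g x = 0 <-> exists z, f z = x].

Definition countable_filtered_colimit_of_free_le (A : comPzRingType)
    (N : lmodType A) (d : nat) : Prop :=
  exists (I : countType) (le : rel I) (n : I -> nat)
         (T : forall i j : I, 'M[A]_(n i, n j))
         (phi : forall i : I, 'rV[A]_(n i) -> N),
    [/\ (exists i : I, True),
        (forall i, le i i) /\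
        (forall i j k, le i j -> le j k -> le i k),
        (forall i j, exists k, le i k /\ le j k),
        (forall i, (n i <= d)%N) &
    [/\ (forall i, T i i = 1%:M),
        (forall i j k, le i j -> le j k -> T i k = T i j *m T j k),
        (forall i, lin (phi i)),
        (forall i j, le i j -> forall x, phi i x = phi j (x *m T i j)) &
        (forall (Q : lmodType A) (psi : forall i : I, 'rV[A]_(n i) -> Q),
            (forall i, lin (psi i)) ->
            (forall i j, le i j -> forall x, psi i x = psi j (x *m T i j)) ->
            exists g : N -> Q,
              (lin g /\ forall i x, g (phi i x) = psi i x) /\
              forall g' : N -> Q,
                (lin g' /\ forall i x, g' (phi i x) = psi i x) -> g' = g)]].

(* Coordinates with respect to m embed M into E^d.  As R has finite rank, every
   subset of E has a countable coinitial subset for divisibility by R (its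
   finitely many prime ideals leave only countably many candidates), so M is
   countably generated.  Adjoining the generators one at a time to a free
   submodule of rank d containing m, exchanging a basis vector of minimal
   valuation when necessary, writes M as the union of a chain of free modules
   L_0 <= L_1 <= ... of rank d.  This survives reduction modulo p: if x in L_k
   is p z in M, then z lies in some later L_K, so x vanishes in L_K / p.  Hence
   M/p is the sequential colimit of the free modules L_k / p, and the telescope
   0 -> (+) L_k/p -> (+) L_k/p -> M/p -> 0 shows that it has projective
   dimension at most 1. *)

From HB Require Import structures.
From mathcomp Require Import all_boot all_order all_algebra fraction.
From mathcomp Require Import finmap monalg zify ring.
From Stdlib Require Import ClassicalEpsilon Classical FunctionalExtensionality.
Import GRing.Theory.
Local Open Scope ring_scope.
Set Implicit Arguments.
Unset Strict Implicit.
Unset Printing Implicit Defensive.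

Local Notation "x %:F" := (@FracField.tofrac _ x).

Lemma exists_witness_in (T : Type) (J P : T -> Prop) :
  (exists x, J x) -> exists x, J x /\ forall y, J y -> P y -> P x.
Proof.
move=> [x0 Jx0]; case: (classic (exists y, J y /\ P y)) => [[y [Jy Py]]|none].
  by exists y.
by exists x0; split=> // y Jy Py; case: none; exists y.
Qed.

Lemma ex_last_false (P : nat -> Prop) N : ~ P 0 -> P N -> exists m, ~ P m /\ P m.+1.
Proof.
move=> P0; elim: N => [//|N IH] PN1.
by case: (classic (P N)) => [/IH|PN]; last exists N.
Qed.

Lemma finite_total_max (I : finType) (le : I -> I -> Prop)
    (le_total : forall a b, le a b \/ le b a)
    (le_trans : forall a b c, le a b -> le b c -> le a c) (P : I -> Prop) :
  (exists x, P x) -> exists k, P k /\ forall l, P l -> le l k.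
Proof.
have le_refl a : le a a by case: (le_total a a).
move=> [x Px]; suff [k [Pk _ kmax]] : exists k, [/\ P k, le x k &
    forall l, l \in enum I -> P l -> le l k].
  by exists k; split=> // l; apply/kmax/mem_enum.
elim: (enum I) => [|a s [k [Pk xk kmax]]].
  by exists x; split.
case: (classic (P a /\ le k a)) => [[Pa ka]|nPa].
  exists a; split=> //; first exact: le_trans xk ka.
  move=> l; rewrite in_cons => /orP[/eqP -> _|ls Pl]; first exact: le_refl.
  exact: le_trans (kmax l ls Pl) ka.
exists k; split=> // l; rewrite in_cons => /orP[/eqP -> Pa|]; last exact: kmax.
by case: (le_total a k) => // ka; case: nPa.
Qed.

Section LinearMaps.
Variables (A : comPzRingType) (U V : lmodType A) (f : U -> V).
Hypothesis f_lin : lin f.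

Lemma linD x y : f (x + y) = f x + f y.
Proof. by rewrite -[x in LHS]scale1r f_lin scale1r. Qed.

Lemma lin0 : f 0 = 0.
Proof. by apply: (addrI (f 0)); rewrite -linD !addr0. Qed.

Lemma linZ a x : f (a *: x) = a *: f x.
Proof. by rewrite -[a *: x]addr0 f_lin lin0 addr0. Qed.

Lemma linB x y : f (x - y) = f x - f y.
Proof. by rewrite linD -scaleN1r linZ scaleN1r. Qed.

Lemma lin_sum (I : Type) (r : seq I) (P : pred I) (F : I -> U) :
  f (\sum_(i <- r | P i) F i) = \sum_(i <- r | P i) f (F i).
Proof. by elim/big_rec2: _ => [|i y1 y2 _ <-]; rewrite ?lin0 ?linD. Qed.

End LinearMaps.

Lemma rV_projective (A : comPzRingType) (d : nat) : projective_mod 'rV[A]_d.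
Proof.
move=> X Y s h s_lin s_surj h_lin.
have [x hx] := choice _ (fun k : 'I_d => s_surj (h (delta_mx 0 k))).
exists (fun v : 'rV[A]_d => \sum_k v 0 k *: x k); split.
  move=> a u v; rewrite scaler_sumr -big_split /=; apply: eq_bigr => k _.
  by rewrite !mxE scalerDl scalerA.
move=> v; rewrite (lin_sum s_lin) [in RHS](row_sum_delta v) (lin_sum h_lin).
by apply: eq_bigr => k _; rewrite (linZ s_lin) hx (linZ h_lin).
Qed.

Section DirectSum.
Variables (A : comPzRingType) (K : choiceType) (V : lmodType A).

Definition dsum : Type := {malg V[K]}.
HB.instance Definition _ := GRing.Zmodule.on dsum.

Definition dsum_scale (c : A) (g : dsum) : dsum := [malg k in msupp g => c *: g@_k].

Lemma dsum_scaleE c g k : (dsum_scale c g)@_k = c *: g@_k.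
Proof. by rewrite mcoeffE; case: msuppP; rewrite ?scaler0. Qed.

Fact dsum_scaleA a b g : dsum_scale a (dsum_scale b g) = dsum_scale (a * b) g.
Proof. by apply/malgP=> k; rewrite !dsum_scaleE scalerA. Qed.

Fact dsum_scale1 : left_id 1 dsum_scale.
Proof. by move=> g; apply/malgP=> k; rewrite dsum_scaleE scale1r. Qed.

Fact dsum_scaleDr : right_distributive dsum_scale +%R.
Proof. by move=> a g g'; apply/malgP=> k; rewrite !(dsum_scaleE, mcoeffD) scalerDr. Qed.

Fact dsum_scaleDl g : {morph dsum_scale^~ g : a b / a + b}.
Proof. by move=> a b; apply/malgP=> k; rewrite !(dsum_scaleE, mcoeffD) scalerDl. Qed.

HB.instance Definition _ := GRing.Zmodule_isLmodule.Build A dsum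
  dsum_scaleA dsum_scale1 dsum_scaleDr dsum_scaleDl.

Lemma dsum_coefZ c (g : dsum) k : (c *: g)@_k = c *: g@_k.
Proof. exact: dsum_scaleE. Qed.

Definition dsum_in (k : K) (v : V) : dsum := << v *g k >>.

Lemma dsum_in_lin k : lin (dsum_in k).
Proof.
move=> a x y; apply/malgP=> j.
by rewrite mcoeffD dsum_coefZ !mcoeffU; case: eqP; rewrite ?scaler0 ?addr0.
Qed.

Lemma dsum_sum_in (g : dsum) : g = \sum_(k <- msupp g) dsum_in k g@_k.
Proof. exact: monalgE. Qed.

Section Extension.
Variables (W : lmodType A) (F : K -> V -> W).
Hypothesis F_lin : forall k, lin (F k).

Definition dsum_ext (g : dsum) : W := \sum_(k <- msupp g) F k g@_k.

Lemma dsum_extEw (g : dsum) (D : {fset K}) :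
  (msupp g `<=` D)%fset -> dsum_ext g = \sum_(k <- D) F k g@_k.
Proof.
move=> le; rewrite /dsum_ext (big_fset_incl _ le) //= => k _ /mcoeff_outdom ->.
exact: lin0.
Qed.

Lemma dsum_ext_lin : lin dsum_ext.
Proof.
move=> a x y; set D := (msupp (a *: x + y) `|` (msupp x `|` msupp y))%fset.
have sub_x : (msupp x `<=` D)%fset by apply: fsubset_trans (fsubsetUr _ _); apply: fsubsetUl.
have sub_y : (msupp y `<=` D)%fset by apply: fsubset_trans (fsubsetUr _ _); apply: fsubsetUr.
rewrite (@dsum_extEw _ D (fsubsetUl _ _)) (dsum_extEw sub_x) (dsum_extEw sub_y).
rewrite scaler_sumr -big_split /=; apply: eq_bigr => k _.
by rewrite mcoeffD dsum_coefZ F_lin.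
Qed.

Lemma dsum_ext_in k v : dsum_ext (dsum_in k v) = F k v.
Proof. by rewrite (dsum_extEw msuppU_le) big_seq_fset1 mcoeffUU. Qed.

End Extension.

Lemma dsum_projective : projective_mod V -> projective_mod dsum.
Proof.
move=> V_proj X Y s h s_lin s_surj h_lin.
have lift_in k : exists l : V -> X, lin l /\ forall v, s (l v) = h (dsum_in k v).
  apply: V_proj => // a u v; rewrite dsum_in_lin; exact: h_lin.
have [l hl] := choice _ lift_in.
exists (dsum_ext l); split; first exact: dsum_ext_lin (fun k => (hl k).1).
move=> g; rewrite [in RHS](dsum_sum_in g) (lin_sum h_lin) (lin_sum s_lin).
by apply: eq_bigr => k _; rewrite (hl k).2.
Qed.

End DirectSum.

Section SequentialColimit.
Variables (A : comPzRingType) (N : lmodType A) (d : nat).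
Variables (T : nat -> 'M[A]_d) (phi : nat -> 'rV[A]_d -> N).

Fixpoint chain_mx (i k : nat) : 'M[A]_d :=
  if k is k'.+1 then chain_mx i k' *m T (i + k')%N else 1%:M.

Lemma chain_mxD i k l : chain_mx i (k + l)%N = chain_mx i k *m chain_mx (i + k)%N l.
Proof.
elim: l => [|l IH]; first by rewrite addn0 mulmx1.
by rewrite addnS /= IH -mulmxA addnA.
Qed.

Definition trans_mx (i j : nat) : 'M[A]_d := chain_mx i (j - i).

Lemma trans_mx_comp i j k : (i <= j <= k)%N ->
  trans_mx i k = trans_mx i j *m trans_mx j k.
Proof.
case/andP=> hij hjk; rewrite /trans_mx.
have -> : (k - i = (j - i) + (k - j))%N by lia.
by rewrite chain_mxD subnKC.
Qed.

Hypothesis phi_lin : forall i, lin (phi i).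
Hypothesis phi_T : forall i x, phi i x = phi i.+1 (x *m T i).
Hypothesis phi_surj : forall y, exists i x, phi i x = y.
Hypothesis phi_ker : forall i x, phi i x = 0 -> exists k, x *m chain_mx i k = 0.

Lemma phi_chain i k x : phi i x = phi (i + k)%N (x *m chain_mx i k).
Proof.
elim: k => [|k IH]; first by rewrite addn0 mulmx1.
by rewrite IH phi_T mulmxA addnS.
Qed.

Lemma phi_trans i j x : (i <= j)%N -> phi i x = phi j (x *m trans_mx i j).
Proof. by move=> hij; rewrite (@phi_chain i (j - i)) subnKC. Qed.

Lemma phi_eq i j x x' : phi i x = phi j x' ->
  exists k, [/\ (i <= k)%N, (j <= k)%N & x *m trans_mx i k = x' *m trans_mx j k].
Proof.
move=> e; set K := maxn i j; have hi := leq_maxl i j; have hj := leq_maxr i j.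
have : phi K (x *m trans_mx i K - x' *m trans_mx j K) = 0.
  by rewrite (linB (phi_lin K)) -!phi_trans // e subrr.
case/phi_ker=> k hk; exists (K + k)%N; rewrite !(leq_trans _ (leq_addr k K)) //.
split=> //; apply/eqP; rewrite -subr_eq0.
have hK : (K <= K + k)%N by apply: leq_addr.
rewrite (@trans_mx_comp i K) ?hi // (@trans_mx_comp j K) ?hj //.
by rewrite !mulmxA -mulmxBl /trans_mx addKn hk.
Qed.

Lemma sequential_colimit : countable_filtered_colimit_of_free_le N d.
Proof.
exists nat, leq, (fun _ => d), trans_mx, phi; split=> //.
- by split=> [//|i j k]; apply: leq_trans.
- by move=> i j; exists (maxn i j); rewrite leq_maxl leq_maxr.
split=> //.
- by move=> i; rewrite /trans_mx subnn.
- by move=> i j k hij hjk; rewrite (@trans_mx_comp _ j) ?hij.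
- by move=> i j hij x; apply: phi_trans.
move=> Q psi psi_lin psi_T.
have psi_eq i j x x' : phi i x = phi j x' -> psi i x = psi j x'.
  by case/phi_eq=> k [hi hj e]; rewrite (psi_T i k) // (psi_T j k) // e.
have g_ex y : exists z, forall i x, phi i x = y -> psi i x = z.
  have [i0 [x0 <-]] := phi_surj y.
  by exists (psi i0 x0) => i x /psi_eq.
have [g hg] := choice _ g_ex.
have g_phi i x : g (phi i x) = psi i x by rewrite (hg (phi i x) i x).
exists g; split; last first.
  move=> g' [_ g'_phi]; apply: functional_extensionality => y.
  by have [i [x <-]] := phi_surj y; rewrite g'_phi g_phi.
split=> // a y y'.
have [i [x <-]] := phi_surj y; have [j [x' <-]] := phi_surj y'.
set K := maxn i j; have hi := leq_maxl i j; have hj := leq_maxr i j.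
rewrite (phi_trans x hi) (phi_trans x' hj) -(phi_lin K) !g_phi.
exact: psi_lin.
Qed.

Local Notation tel := (@dsum A nat 'rV[A]_d).

Lemma shift_lin i : lin (fun v : 'rV[A]_d => dsum_in i.+1 (v *m T i)).
Proof. by move=> a u v; rewrite mulmxDl -scalemxAl dsum_in_lin. Qed.

Definition tel_shift : tel -> tel := dsum_ext (fun i v => dsum_in i.+1 (v *m T i)).
Definition tel_map (g : tel) : tel := g - tel_shift g.
Definition tel_sum : tel -> N := dsum_ext phi.

Lemma tel_map_lin : lin tel_map.
Proof.
move=> a x y; rewrite /tel_map /tel_shift (dsum_ext_lin shift_lin).
by rewrite scalerBr opprD addrACA.
Qed.

Lemma tel_sum_lin : lin tel_sum.
Proof. exact: dsum_ext_lin. Qed.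

Lemma tel_map_in i v : tel_map (dsum_in i v) = dsum_in i v - dsum_in i.+1 (v *m T i).
Proof. by rewrite /tel_map /tel_shift (dsum_ext_in shift_lin). Qed.

Lemma tel_sum_in i v : tel_sum (dsum_in i v) = phi i v.
Proof. exact: dsum_ext_in phi_lin i v. Qed.

Lemma tel_shift_coef g j : (tel_shift g)@_j = if j is i.+1 then g@_i *m T i else 0.
Proof.
rewrite /tel_shift /dsum_ext raddf_sum /=.
under eq_bigr do rewrite mcoeffU.
case: j => [|j]; first by rewrite big1.
have [jg|jg] := boolP (j \in msupp g).
  rewrite (big_fsetD1 j) //= eqxx big1_fset ?addr0 // => i.
  by rewrite in_fsetD1 eqSS => /andP[/negbTE ->].
rewrite mcoeff_outdom // mul0mx big1_fset // => i ig _.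
by rewrite eqSS; case: eqP => // eij; move: jg; rewrite -eij ig.
Qed.

Lemma tel_map_inj : injective tel_map.
Proof.
move=> x y e; apply/eqP; rewrite -subr_eq0; apply/eqP/malgP => j.
have z0 : tel_map (x - y) = 0 by rewrite (linB tel_map_lin) e subrr.
rewrite mcoeff0; elim: j => [|j IH] /=.
  by have := congr1 (mcoeff 0) z0; rewrite mcoeffB tel_shift_coef subr0 mcoeff0.
by have := congr1 (mcoeff j.+1) z0; rewrite mcoeffB tel_shift_coef IH mul0mx subr0 mcoeff0.
Qed.

Lemma tel_sum_map z : tel_sum (tel_map z) = 0.
Proof.
rewrite (dsum_sum_in z) (lin_sum tel_map_lin) (lin_sum tel_sum_lin) big1 // => i _.
by rewrite tel_map_in (linB tel_sum_lin) !tel_sum_in phi_T subrr.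
Qed.

Definition tel_equiv (g g' : tel) := exists z, g = tel_map z + g'.

Lemma tel_push i k v : tel_equiv (dsum_in i v) (dsum_in (i + k)%N (v *m chain_mx i k)).
Proof.
elim: k => [|k [z IH]]; first by exists 0; rewrite (lin0 tel_map_lin) add0r addn0 mulmx1.
exists (z + dsum_in (i + k)%N (v *m chain_mx i k)).
by rewrite (linD tel_map_lin) tel_map_in -addrA [chain_mx _ _.+1]/= addnS mulmxA subrK.
Qed.

Lemma tel_reduce g : exists top w, tel_equiv g (dsum_in top w).
Proof.
set top := (\max_(i <- msupp g) i)%N; exists top.
rewrite [X in tel_equiv X](dsum_sum_in g) big_seq.
apply: (big_ind (fun x => exists w, tel_equiv x (dsum_in top w))).
- by exists 0, 0; rewrite (lin0 tel_map_lin) (lin0 (dsum_in_lin top)) addr0.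
- move=> x y [w [z ->]] [w' [z' ->]]; exists (w + w'), (z + z').
  by rewrite (linD tel_map_lin) (linD (dsum_in_lin top)) addrACA.
move=> i ig; have i_top : (i <= top)%N by rewrite /top (bigmaxn_sup_seq _ ig).
by eexists; rewrite -(subnKC i_top); apply: tel_push.
Qed.

Lemma tel_exact x : tel_sum x = 0 <-> exists z, tel_map z = x.
Proof.
split=> [x0|[z <-]]; last exact: tel_sum_map.
have [top [w [z ex]]] := tel_reduce x.
have /phi_ker[k wk0] : phi top w = 0.
  by rewrite -tel_sum_in -x0 ex (linD tel_sum_lin) tel_sum_map add0r.
have [z' ew] := tel_push top k w.
exists (z + z'); rewrite ex ew wk0 (lin0 (dsum_in_lin _)) addr0.
exact: linD tel_map_lin _ _.
Qed.

Lemma sequential_colimit_projdim_le1 : projdim_le1 N.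
Proof.
have tel_proj : projective_mod tel by apply/dsum_projective/rV_projective.
exists tel, tel, tel_map, tel_sum; split=> //.
- exact: conj tel_map_lin tel_sum_lin.
- exact: tel_map_inj.
- by move=> y; have [i [x <-]] := phi_surj y; exists (dsum_in i x); apply: tel_sum_in.
exact: tel_exact.
Qed.

End SequentialColimit.

Section Divisibility.
Variable R : idomainType.
Local Notation E := {fraction R}.

Definition rdvd (a b : R) := exists c, b = c * a.
Definition fdvd (x y : E) := exists a : R, y = a%:F * x.

Lemma rdvd_refl a : rdvd a a.
Proof. by exists 1; rewrite mul1r. Qed.

Lemma rdvd_trans a b c : rdvd a b -> rdvd b c -> rdvd a c.
Proof. by move=> [x ->] [y ->]; exists (y * x); rewrite mulrA. Qed.

Lemma rdvd_exp2r a b N : rdvd a b -> rdvd (a ^+ N) (b ^+ N).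
Proof. by move=> [x ->]; exists (x ^+ N); rewrite exprMn. Qed.

Lemma rdvd_exp2l a N M : (N <= M)%N -> rdvd (a ^+ N) (a ^+ M).
Proof. by move=> h; exists (a ^+ (M - N)); rewrite -exprD subnK. Qed.

Lemma fdvd_refl x : fdvd x x.
Proof. by exists 1; rewrite tofrac1 mul1r. Qed.

Lemma fdvd_trans x y z : fdvd x y -> fdvd y z -> fdvd x z.
Proof. by move=> [a ->] [b ->]; exists (b * a); rewrite tofracM mulrA. Qed.

Lemma fdvd0 x : fdvd x 0.
Proof. by exists 0; rewrite tofrac0 mul0r. Qed.

Lemma fdvd_mul x y x' y' : fdvd x y -> fdvd x' y' -> fdvd (x * x') (y * y').
Proof. by move=> [a ->] [b ->]; exists (a * b); rewrite tofracM mulrACA. Qed.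

Lemma fdvd_exp2r x y N : fdvd x y -> fdvd (x ^+ N) (y ^+ N).
Proof. by move=> [a ->]; exists (a ^+ N); rewrite exprMn tofracXn. Qed.

Lemma fdvd_mul2r x y z : fdvd x y -> fdvd (x * z) (y * z).
Proof. by move=> h; apply: fdvd_mul h (fdvd_refl z). Qed.

Lemma fdvd_frac a b : fdvd a%:F b%:F <-> rdvd a b.
Proof.
split=> -[c hc]; exists c; last by rewrite hc tofracM.
by apply/eqP; rewrite -tofrac_eq tofracM hc.
Qed.

Lemma fdvd_mulr_frac x a b : rdvd a b -> fdvd (x * a%:F) (x * b%:F).
Proof. by move=> [c ->]; exists c; rewrite tofracM mulrCA. Qed.

End Divisibility.

Section ValuationRing.
Variable R : idomainType.
Hypothesis hval : valuation_ring R.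
Local Notation E := {fraction R}.

Lemma fdvd_total (x y : E) : fdvd x y \/ fdvd y x.
Proof.
have [->|x0] := eqVneq x 0; first by right; apply: fdvd0.
have [->|y0] := eqVneq y 0; first by left; apply: fdvd0.
have : y / x != 0 by rewrite mulf_neq0 ?invr_eq0.
case/hval=> [[c hc]|[c hc]]; first by left; exists c; rewrite -hc mulfVK.
by right; exists c; rewrite -hc invfM invrK mulrC mulrA mulfV ?mul1r.
Qed.

Lemma rdvd_total (a b : R) : rdvd a b \/ rdvd b a.
Proof. by case: (fdvd_total a%:F b%:F) => /fdvd_frac; [left|right]. Qed.

Lemma rdvd_min (I : finType) (r : I -> R) (i0 : I) : exists k, forall l, rdvd (r k) (r l).
Proof.
have [|k [_ k_min]] := @finite_total_max I (fun l k => rdvd (r k) (r l))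
  (fun a b => rdvd_total (r b) (r a)) (fun a b c ab bc => rdvd_trans bc ab) (fun => True).
  by exists i0.
by exists k => l; apply: k_min.
Qed.

Lemma fdvd_exp2r_inv (x y : E) N : fdvd (x ^+ N.+1) (y ^+ N.+1) -> fdvd x y.
Proof.
move=> [b hb]; case: (fdvd_total x y) => // -[a ha].
have [->|y0] := eqVneq y 0; first exact: fdvd0.
rewrite ha exprMn mulrA -tofracXn -tofracM in hb.
have ba1 : b * a ^+ N.+1 = 1.
  apply/eqP; rewrite -tofrac_eq tofrac1; apply/eqP.
  by apply: (mulIf (expf_neq0 N.+1 y0)); rewrite mul1r -hb.
exists (b * a ^+ N); rewrite ha mulrA -tofracM -mulrA -exprSr ba1 tofrac1.
by rewrite mul1r.
Qed.

Definition radical (b x : R) := exists N, rdvd b (x ^+ N).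
Definition same_radical (a b : R) := radical a b /\ radical b a.

Lemma rdvd_radical a b : rdvd a b -> radical a b.
Proof. by exists 1%N; rewrite expr1. Qed.

Lemma radical_prime (b : R) : b != 0 -> ~ rdvd b 1 -> nonzero_prime_ideal (radical b).
Proof.
move=> b0 b1; split; last by exists b; split=> //; apply/rdvd_radical/rdvd_refl.
have radM r x : radical b x -> radical b (r * x).
  by move=> [N [e he]]; exists N, (r ^+ N * e); rewrite exprMn he mulrA.
split=> //.
- by exists 1%N, 0; rewrite expr1 mul0r.
- move=> x y rx ry; case: (rdvd_total x y) => [[c ->]|[c ->]].
    by rewrite -[x in x + _]mul1r -mulrDl; apply: radM.
  by rewrite -[y in _ + y]mul1r -mulrDl; apply: radM.
- by move=> [N]; rewrite expr1n.
move=> x y [N [e he]]; case: (rdvd_total x y) => [[c hc]|[c hc]].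
  right; exists (N + N)%N, (c ^+ N * e).
  by rewrite -mulrA -he exprD {1}hc !exprMn mulrA.
left; exists (N + N)%N, (c ^+ N * e).
by rewrite -mulrA -he exprD {1}hc !exprMn mulrA mulrAC.
Qed.

Lemma finite_rank_radicals : finite_rank R ->
  exists n (h : 'I_n -> R), forall b, b != 0 -> ~ rdvd b 1 -> exists k, same_radical b (h k).
Proof.
move=> [n [Pr hPr]].
pose generates k b := [/\ b != 0, ~ rdvd b 1 & forall x, radical b x <-> Pr k x].
have [h hh] := choice _ (fun k : 'I_n =>
  @exists_witness_in _ (fun => True) (generates k) (ex_intro _ 0 I)).
exists n, h => b b0 b1.
have [k [kn bk]] := hPr _ (radical_prime b0 b1).
have [_ _ hk] := (hh (Ordinal kn)).2 b I (And3 b0 b1 bk).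
by exists (Ordinal kn); split; [apply/bk/hk | apply/hk/bk]; apply/rdvd_radical/rdvd_refl.
Qed.

End ValuationRing.

Section CountableCoinitial.
Variable R : idomainType.
Hypothesis hval : valuation_ring R.
Local Notation E := {fraction R}.
Variables (n : nat) (h : 'I_n -> R).
Hypothesis h_radicals : forall b, b != 0 -> ~ rdvd b 1 -> exists k, same_radical b (h k).
Variable J : E -> Prop.

Definition bounded_mod (k : 'I_n) (x : E) :=
  forall y, J y -> y != 0 -> exists N, fdvd x (y * (h k ^+ N)%:F).

(* The prime ideal of [k] is contained in that of [l]. *)
Definition radical_le (l k : 'I_n) := radical (h l) (h k).

Lemma radical_le_total l k : radical_le l k \/ radical_le k l.
Proof.
by case: (rdvd_total hval (h l) (h k)) => /rdvd_radical; [left|right].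
Qed.

Lemma radical_le_trans a b c : radical_le a b -> radical_le b c -> radical_le a c.
Proof.
move=> [N hN] [M hM]; exists (M * N)%N; apply: rdvd_trans hN _.
by rewrite exprM; apply: rdvd_exp2r.
Qed.

Lemma bounded_mod_class s : J s -> s != 0 -> (exists y, J y /\ ~ fdvd s y) ->
  exists k, bounded_mod k s /\
    exists y a j, [/\ J y, s = a%:F * y & rdvd (h k) (a ^+ j.+1)].
Proof.
move=> Js s0 [y0 [Jy0 sy0]].
have class_of y : J y -> ~ fdvd s y ->
    exists l a, s = a%:F * y /\ same_radical a (h l).
  move=> Jy sy; have [ys|//] := fdvd_total hval y s; have [a ha] := ys.
  have a0 : a != 0 by apply: contra_neq s0; rewrite ha => ->; rewrite tofrac0 mul0r.
  have a1 : ~ rdvd a 1.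
    by move=> [c c1]; apply: sy; exists c; rewrite ha mulrA -tofracM -c1 tofrac1 mul1r.
  by have [l al] := h_radicals a0 a1; exists l, a.
pose S l := exists y a, [/\ J y, ~ fdvd s y, s = a%:F * y & same_radical a (h l)].
(* [k] has the least prime ideal among the radicals of the quotients [s / y],
   [y] in [J] strictly below [s]. *)
have [|k [Sk kmax]] := finite_total_max radical_le_total radical_le_trans (P := S).
  by have [l [a [ha al]]] := class_of y0 Jy0 sy0; exists l, y0, a.
exists k; split.
  move=> y Jy _; case: (classic (fdvd s y)) => sy.
    by exists 0%N; rewrite expr0 tofrac1 mulr1.
  have [l [a [ha al]]] := class_of y Jy sy.
  have [M lk] : exists M, rdvd (h l) (h k ^+ M) by apply: kmax; exists y, a.
  have [[N1 al1] _] := al.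
  exists (M * N1)%N; rewrite ha mulrC; apply: fdvd_mulr_frac.
  by apply: rdvd_trans al1 _; rewrite exprM; apply: rdvd_exp2r.
have [y [a [Jy _ ha [_ [N ka]]]]] := Sk.
exists y, a, N; split=> //; apply: rdvd_trans ka _; exact: rdvd_exp2l.
Qed.

Lemma bounded_mod_cover k c s y a j : bounded_mod k c -> J s -> s != 0 ->
  ~ fdvd c s -> s = a%:F * y -> rdvd (h k) (a ^+ j.+1) ->
  exists m, ~ fdvd (c ^+ j.+1) (y ^+ j.+1 * (h k ^+ m)%:F) /\
    forall x, ~ fdvd (c ^+ j.+1) (x ^+ j.+1 * (h k ^+ m)%:F) -> fdvd x s.
Proof.
move=> c_bd Js s0 cs ha [t ht]; have [N0 hN0] := c_bd s Js s0.
pose P m := fdvd (c ^+ j.+1) (s ^+ j.+1 * (h k ^+ m)%:F).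
have [m [Pm Pm1]] : exists m, ~ P m /\ P m.+1.
  apply: (@ex_last_false P (N0 * j.+1)) => [P0|].
    by apply: cs; apply: (fdvd_exp2r_inv hval (N := j)); rewrite /P expr0 tofrac1 mulr1 in P0.
  by rewrite /P exprM tofracXn -exprMn; apply: fdvd_exp2r.
exists m.+1; split=> [cy|x cx].
  apply: Pm; apply: fdvd_trans cy _; exists t.
  rewrite ha exprMn -tofracXn ht [h k ^+ m.+1]exprS !tofracM.
  by move: (y ^+ j.+1) => Y; ring.
case: (fdvd_total hval x s) => // sx; case: cx.
by apply: fdvd_trans Pm1 _; apply/fdvd_mul2r/fdvd_exp2r.
Qed.

Lemma countable_coinitial : J 0 ->
  exists f : nat -> E, (forall i, J (f i)) /\ forall s, J s -> exists i, fdvd (f i) s.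
Proof.
move=> J0; have J_ne : exists x, J x by exists 0.
(* Candidates: a least element of [J]; for each [k], an element bounded modulo
   [h k]; for each [(k, m, j)], an [x] such that [ck k ^+ j] does not divide
   [x ^+ j * h k ^+ m].  Each lies in [J] and has its property as soon as some
   element of [J] does. *)
have [c0 [Jc0 c0_min]] := exists_witness_in (fun x => forall y, J y -> fdvd x y) J_ne.
have [ck hck] := choice _ (fun k => exists_witness_in (bounded_mod k) J_ne).
pose below (kmj : 'I_n * (nat * nat)) x :=
  ~ fdvd (ck kmj.1 ^+ kmj.2.2) (x ^+ kmj.2.2 * (h kmj.1 ^+ kmj.2.1)%:F).
have [cb hcb] := choice _ (fun kmj => exists_witness_in (below kmj) J_ne).
pose cand (c : option ('I_n * option (nat * nat))) :=
  if c is Some (k, o) then (if o is Some mj then cb (k, mj) else ck k) else c0.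
exists (fun i => if choice.unpickle i is Some c then cand c else 0); split.
  by move=> i; case: choice.unpickle => [[[k [mj|]]|]|] //=; [apply: (hcb _).1 | apply: (hck _).1].
move=> s Js; suff [c cs] : exists c, fdvd (cand c) s.
  by exists (choice.pickle c); rewrite choice.pickleK.
have [->|s0] := eqVneq s 0; first by exists None; apply: fdvd0.
case: (classic (forall y, J y -> fdvd s y)) => [s_min|s_nmin].
  by exists None; apply: (c0_min s Js s_min s Js).
have s_above : exists y, J y /\ ~ fdvd s y.
  by apply: NNPP => none; apply: s_nmin => y Jy; apply: NNPP => sy; apply: none; exists y.
have [k [s_bd [y [a [j [Jy ha ka]]]]]] := bounded_mod_class Js s0 s_above.
case: (classic (fdvd (ck k) s)) => cks; first by exists (Some (k, None)).
have [m [ym xm]] := bounded_mod_cover ((hck k).2 s Js s_bd) Js s0 cks ha ka.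
by exists (Some (k, Some (m, j.+1))); apply: xm; apply: (hcb (k, (m, j.+1))).2 y Jy ym.
Qed.

End CountableCoinitial.

Section FracCoordinates.
Variables (R : idomainType) (M : lmodType R) (d : nat) (m : 'I_d -> M).
Local Notation E := {fraction R}.
Hypothesis htf : torsionfree M.
Hypothesis m_free : forall r : 'I_d -> R, \sum_(k < d) r k *: m k = 0 -> forall k, r k = 0.
Hypothesis m_span : forall x : M, exists (s : R) (r : 'I_d -> R),
  s != 0 /\ s *: x = \sum_(k < d) r k *: m k.

Definition represents (x : M) (sr : R * ('I_d -> R)) :=
  sr.1 != 0 /\ sr.1 *: x = \sum_(k < d) sr.2 k *: m k.

Lemma represents_frac x sr sr' : represents x sr -> represents x sr' ->
  forall k, (sr.2 k)%:F / sr.1%:F = (sr'.2 k)%:F / sr'.1%:F.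
Proof.
case: sr sr' => [s r] [s' r'] [/= s0 hx] [/= s'0 hx'] k.
have e : s' * r k - s * r' k = 0.
  apply: m_free (fun k => s' * r k - s * r' k) _ k.
  rewrite (eq_bigr (fun k => s' *: (r k *: m k) - s *: (r' k *: m k))).
    by rewrite sumrB -!scaler_sumr -hx -hx' !scalerA mulrC subrr.
  by move=> i _; rewrite scalerBl !scalerA.
apply/eqP; rewrite eqr_div ?tofrac_eq0 // -!tofracM tofrac_eq mulrC [_ * s]mulrC.
by rewrite -subr_eq0 e.
Qed.

Lemma frac_coordinates : exists c : M -> 'I_d -> E,
  (forall a x y k, c (a *: x + y) k = a%:F * c x k + c y k) /\
  (forall x, (forall k, c x k = 0) -> x = 0).
Proof.
have [sr hsr] : exists sr, forall x, represents x (sr x).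
  by apply: choice => x; have [s [r hx]] := m_span x; exists (s, r).
exists (fun x k => ((sr x).2 k)%:F / (sr x).1%:F); split.
  move=> a x y k; case: (hsr x) (hsr y) => [s0 hx] [s'0 hy].
  set s := (sr x).1 in s0 hx *; set s' := (sr y).1 in s'0 hy *.
  pose rxy := (s * s', fun k => a * s' * (sr x).2 k + s * (sr y).2 k).
  have rep_xy : represents (a *: x + y) rxy.
    split; first by rewrite mulf_neq0.
    have -> : (s * s') *: (a *: x + y) = (a * s') *: (s *: x) + s *: (s' *: y).
      by rewrite scalerDr !scalerA; congr (_ *: _ + _ *: _); ring.
    rewrite hx hy !scaler_sumr -big_split /=; apply: eq_bigr => i _.
    by rewrite !scalerA scalerDl.
  rewrite (represents_frac (hsr _) rep_xy) /= tofracD !tofracM.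
  by rewrite mulrA addf_div ?tofrac_eq0 // mulrAC [_ * s%:F]mulrC.
move=> x cx0; case: (hsr x) => s0 hx.
have : (sr x).1 *: x = 0.
  rewrite hx big1 // => k _; have := cx0 k.
  by move/eqP; rewrite mulf_eq0 invr_eq0 !tofrac_eq0 (negbTE s0) orbF => /eqP ->; rewrite scale0r.
by case/htf => // e; move: s0; rewrite e eqxx.
Qed.

End FracCoordinates.

Definition generated_by (R : comPzRingType) (M : lmodType R) (G : nat -> M) :=
  forall S : M -> Prop, S 0 -> (forall a x y, S x -> S y -> S (a *: x + y)) ->
    (forall i, S (G i)) -> forall x, S x.

Section CountableGeneration.
Variable R : idomainType.
Hypothesis hval : valuation_ring R.
Local Notation E := {fraction R}.
Variables (M : lmodType R) (d : nat) (c : M -> 'I_d -> E).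
Hypothesis c_lin : forall a x y k, c (a *: x + y) k = a%:F * c x k + c y k.
Hypothesis c_inj : forall x, (forall k, c x k = 0) -> x = 0.
Variables (n : nat) (h : 'I_n -> R).
Hypothesis h_radicals : forall b, b != 0 -> ~ rdvd b 1 -> exists k, same_radical b (h k).

Lemma coord0 k : c 0 k = 0.
Proof.
have e := c_lin 1 0 0 k; rewrite scaler0 addr0 tofrac1 mul1r in e.
by apply: (addrI (c 0 k)); rewrite addr0 -e.
Qed.

Definition supported_below (k : nat) (x : M) := forall j : 'I_d, (k <= j)%N -> c x j = 0.

Definition leading_coords (j : 'I_d) (e : E) := exists x, supported_below j.+1 x /\ c x j = e.

Lemma countably_generated : exists G : nat -> M, generated_by G.
Proof.
have cut j : exists f : nat -> E, (forall i, leading_coords j (f i)) /\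
    forall e, leading_coords j e -> exists i, fdvd (f i) e.
  by apply: (countable_coinitial hval h_radicals); exists 0; split=> [k _|]; apply: coord0.
have [f hf] := choice _ cut.
have [g hg] := choice _ (fun ji : 'I_d * nat => (hf ji.1).1 ji.2).
exists (fun i => if choice.unpickle i is Some ji then g ji else 0) => S S0 S_lin SG.
have Sg ji : S (g ji) by have := SG (choice.pickle ji); rewrite choice.pickleK.
suff S_below k x : supported_below k x -> S x.
  by move=> x; apply: (S_below d) => j; rewrite leqNgt ltn_ord.
elim: k x => [|k IH] x xk.
  by rewrite (c_inj (fun j => xk j isT)).
have [kd|dk] := ltnP k d; last first.
  by apply: IH => j kj; move: (ltn_ord j); rewrite ltnNge (leq_trans dk kj).
set j := Ordinal kd; have [i [a ha]] := (hf j).2 (c x j) (ex_intro _ x (conj xk erefl)).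
have [gk gj] := hg (j, i).
have -> : x = a *: g (j, i) + ((- a) *: g (j, i) + x) by rewrite scaleNr addNKr.
apply: S_lin (Sg _) (IH _ _) => l kl; rewrite c_lin.
have [jl|lk] := ltnP k l; first by rewrite gk // xk // mulr0 addr0.
have -> : l = j by apply: val_inj; apply/eqP; rewrite eqn_leq lk.
by rewrite gj ha tofracN mulNr addNr.
Qed.

End CountableGeneration.

Section Lattices.
Variable R : idomainType.
Hypothesis hval : valuation_ring R.
Variables (M : lmodType R) (d : nat) (m : 'I_d -> M).
Hypothesis htf : torsionfree M.
Hypothesis m_free : forall r : 'I_d -> R, \sum_(k < d) r k *: m k = 0 -> forall k, r k = 0.
Hypothesis m_span : forall x : M, exists (s : R) (r : 'I_d -> R),
  s != 0 /\ s *: x = \sum_(k < d) r k *: m k.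

Definition comb (b : 'I_d -> M) (r : 'rV[R]_d) : M := \sum_(k < d) r 0 k *: b k.
Definition lspan (b : 'I_d -> M) (x : M) := exists r, x = comb b r.
Definition lattice (b : 'I_d -> M) :=
  (forall r, comb b r = 0 -> r = 0) /\ forall j, lspan b (m j).
Definition trans_rel (b b' : 'I_d -> M) (T : 'M[R]_d) := forall j, b j = comb b' (row j T).

Lemma comb_lin b : lin (comb b).
Proof.
move=> a r r'; rewrite /comb scaler_sumr -big_split /=; apply: eq_bigr => k _.
by rewrite !mxE scalerDl scalerA.
Qed.

Lemma comb_delta b k : comb b (delta_mx 0 k) = b k.
Proof.
rewrite /comb (bigD1 k) //= mxE !eqxx scale1r big1 ?addr0 // => i /negbTE ik.
by rewrite mxE ik andbF scale0r.
Qed.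

Lemma comb_trans b b' T r : trans_rel b b' T -> comb b r = comb b' (r *m T).
Proof.
move=> bT; rewrite [in RHS]mulmx_sum_row (lin_sum (comb_lin b')) {1}/comb.
by apply: eq_bigr => k _; rewrite bT (linZ (comb_lin b')).
Qed.

Lemma lspan_trans b b' T x : trans_rel b b' T -> lspan b x -> lspan b' x.
Proof. by move=> bT [r ->]; exists (r *m T); apply: comb_trans. Qed.

Lemma lspan_lin b a x y : lspan b x -> lspan b y -> lspan b (a *: x + y).
Proof. by move=> [r ->] [r' ->]; exists (a *: r + r'); rewrite comb_lin. Qed.

Lemma lspan0 b : lspan b 0.
Proof. by exists 0; rewrite (lin0 (comb_lin b)). Qed.

Lemma lattice_m : lattice m.
Proof.
split=> [r r0|j]; last by exists (delta_mx 0 j); rewrite comb_delta.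
by apply/rowP => k; rewrite mxE; apply: (m_free (r := fun k => r 0 k)).
Qed.

Lemma lattice_scaled b x : lattice b -> exists s r, s != 0 /\ s *: x = comb b r.
Proof.
move=> [_ b_m]; have [s [r [s0 hx]]] := m_span x; have [u hu] := choice _ b_m.
exists s, (\sum_(k < d) r k *: u k); split=> //.
by rewrite hx (lin_sum (comb_lin b)); apply: eq_bigr => k _; rewrite (linZ (comb_lin b)) -hu.
Qed.

Lemma torsionfree_scalerI (s : R) (x y : M) : s != 0 -> s *: x = s *: y -> x = y.
Proof.
move=> s0 e; have : s *: (x - y) = 0 by rewrite scalerBr e subrr.
by case/htf => [s_0|/eqP]; [move: s0; rewrite s_0 eqxx | rewrite subr_eq0 => /eqP].
Qed.

Section Exchange.
Variables (b : 'I_d -> M) (k : 'I_d) (x : M).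
Local Notation b' := (fun l => if l == k then x else b l).

Lemma comb_exchange v : comb b' v = v 0 k *: x + comb b (v - v 0 k *: delta_mx 0 k).
Proof.
rewrite /comb (bigD1 k) //= [in RHS](bigD1 k) //= !mxE !eqxx mulr1 subrr scale0r add0r.
congr (_ + _); apply: eq_bigr => l /negbTE lk.
by rewrite !mxE lk andbF mulr0 subr0.
Qed.

Lemma lattice_exchange (u : R) (w : 'rV[R]_d) : lattice b -> u != 0 -> w 0 k = 1 ->
  u *: x = comb b w -> exists T, lattice b' /\ trans_rel b b' T.
Proof.
move=> [b_free b_m] u0 wk ux.
(* [v] expresses [b k = u *: x - \sum_(l != k) w 0 l *: b l]. *)
pose v := u *: delta_mx 0 k - (w - delta_mx 0 k).
have bT : trans_rel b b' (\matrix_j (if j == k then v else delta_mx 0 j)).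
  move=> j; rewrite rowK; case: eqP => [->|/eqP jk]; last by rewrite comb_delta (negbTE jk).
  rewrite comb_exchange.
  have -> : v 0 k = u by rewrite !mxE !eqxx wk mulr1 subrr subr0.
  have -> : v - u *: delta_mx 0 k = delta_mx 0 k - w by rewrite addrAC subrr add0r opprB.
  by rewrite (linB (comb_lin b)) comb_delta ux addrC subrK.
eexists; split; last exact: bT.
split=> [a|j]; last by apply: lspan_trans bT _.
rewrite comb_exchange => a0.
have : comb b (a 0 k *: w + u *: (a - a 0 k *: delta_mx 0 k)) = 0.
  by rewrite comb_lin (linZ (comb_lin b)) -ux scalerA mulrC -scalerA -scalerDr a0 scaler0.
move/b_free/rowP => ha.
have ak : a 0 k = 0 by have := ha k; rewrite !mxE !eqxx wk mulr1 subrr mulr0 addr0.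
have /eqP : u *: a = 0.
  by apply/rowP => l; have := ha l; rewrite !mxE ak mul0r add0r mul0r subr0.
by rewrite scalemx_eq0 (negbTE u0) => /eqP.
Qed.

End Exchange.

Lemma lattice_step b x : lattice b ->
  exists b' T, [/\ lattice b', lspan b' x & trans_rel b b' T].
Proof.
move=> b_lat; have [s [r [s0 sx]]] := lattice_scaled x b_lat.
case: (classic (forall l, rdvd s (r 0 l))) => [s_r|s_nr].
  have [w hw] := choice _ s_r; exists b, 1%:M; split=> //; last first.
    by move=> j; rewrite row1 comb_delta.
  exists (\row_l w l); apply: (@torsionfree_scalerI s) => //.
  rewrite sx -(linZ (comb_lin b)); congr comb; apply/rowP => l.
  by rewrite !mxE hw mulrC.
have [l0 sl0] : exists l0, ~ rdvd s (r 0 l0).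
  by apply: NNPP => none; apply: s_nr => l; apply: NNPP => sl; apply: none; exists l.
have [k rk_r] := rdvd_min hval (fun l => r 0 l) l0.
have [u su] : rdvd (r 0 k) s.
  by case: (rdvd_total hval s (r 0 l0)) => // l0s; apply: rdvd_trans (rk_r l0) l0s.
have /andP[u0 rk0] : (u != 0) && (r 0 k != 0) by rewrite -negb_or -mulf_eq0 -su.
have [w hw] := choice _ rk_r.
have wk : (\row_l w l) 0 k = 1 by apply: (mulIf rk0); rewrite mxE -hw mul1r.
have ux : u *: x = comb b (\row_l w l).
  apply: (@torsionfree_scalerI (r 0 k)) => //; rewrite scalerA mulrC -su sx.
  rewrite -(linZ (comb_lin b)); congr comb; apply/rowP => l.
  by rewrite !mxE hw mulrC.
have [T [b'_lat bT]] := lattice_exchange b_lat u0 wk ux.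
by eexists _, T; split; [exact: b'_lat | exists (delta_mx 0 k); rewrite comb_delta eqxx |].
Qed.

Lemma lattice_chain (G : nat -> M) : exists (B : nat -> 'I_d -> M) (T : nat -> 'M[R]_d),
  forall k, [/\ lattice (B k), trans_rel (B k) (B k.+1) (T k) & lspan (B k.+1) (G k)].
Proof.
have step bx : exists bT : ('I_d -> M) * 'M[R]_d, lattice bx.1 ->
    [/\ lattice bT.1, lspan bT.1 bx.2 & trans_rel bx.1 bT.1 bT.2].
  case: (classic (lattice bx.1)) => [b_lat|nlat]; last by exists (bx.1, 1%:M).
  by have [b' [T hbT]] := lattice_step bx.2 b_lat; exists (b', T).
have [next hnext] := choice _ step.
pose B := fix B k := if k is k'.+1 then (next (B k', G k')).1 else m.
exists B, (fun k => (next (B k, G k)).2).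
suff B_lat k : lattice (B k) by move=> k; have [] := hnext (B k, G k) (B_lat k).
by elim: k => [|k IH]; [exact: lattice_m | have [] := hnext (B k, G k) IH].
Qed.

End Lattices.

Section ReductionModP.
Variables (p : nat) (R : idomainType) (M : lmodType R) (d : nat).
Variables (B : nat -> 'I_d -> M) (T : nat -> 'M[R]_d) (G : nat -> M).
Hypothesis B_free : forall k r, comb (B k) r = 0 -> r = 0.
Hypothesis B_trans : forall k, trans_rel (B k) (B k.+1) (T k).
Hypothesis B_span_G : forall i, lspan (B i.+1) (G i).
Hypothesis G_gen : generated_by G.
Variables (Rp : comPzRingType) (q : {rmorphism R -> Rp}).
Hypothesis hq_surj : forall y : Rp, exists a : R, q a = y.
Hypothesis hq_ker : forall a : R, q a = 0 <-> exists c : R, a = p%:R * c.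
Variables (N : lmodType Rp) (pi : M -> N).
Hypothesis hpi_add : forall x y : M, pi (x + y) = pi x + pi y.
Hypothesis hpi_scale : forall (r : R) (x : M), pi (r *: x) = q r *: pi x.
Hypothesis hpi_surj : forall y : N, exists x : M, pi x = y.
Hypothesis hpi_ker : forall x : M, pi x = 0 <-> exists z : M, x = p%:R *: z.

Lemma comb_chain k j r : comb (B k) r = comb (B (k + j)%N) (r *m chain_mx T k j).
Proof.
elim: j => [|j IH]; first by rewrite addn0 mulmx1.
by rewrite IH (comb_trans _ (B_trans _)) mulmxA addnS.
Qed.

Lemma lspan_up k j x : (k <= j)%N -> lspan (B k) x -> lspan (B j) x.
Proof.
by move=> kj [r ->]; exists (r *m chain_mx T k (j - k)); rewrite (comb_chain k (j - k)) subnKC.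
Qed.

Lemma lspan_union x : exists k, lspan (B k) x.
Proof.
apply: (G_gen (S := fun x => exists k, lspan (B k) x)) => [|a x1 x2 [k1 h1] [k2 h2]|i].
- by exists 0%N; apply: lspan0.
- exists (maxn k1 k2); apply: lspan_lin.
    exact: lspan_up (leq_maxl k1 k2) h1.
  exact: lspan_up (leq_maxr k1 k2) h2.
by exists i.+1; apply: B_span_G.
Qed.

Lemma lift_row (v : 'rV[Rp]_d) : exists r, map_mx q r = v.
Proof.
have [a ha] := choice _ (fun l => hq_surj (v 0 l)).
by exists (\row_l a l); apply/rowP => l; rewrite !mxE ha.
Qed.

Definition phi_p k (v : 'rV[Rp]_d) : N := \sum_l v 0 l *: pi (B k l).
Definition T_p k : 'M[Rp]_d := map_mx q (T k).

Lemma pi_sum (I : Type) (s : seq I) (F : I -> M) :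
  pi (\sum_(i <- s) F i) = \sum_(i <- s) pi (F i).
Proof.
have pi0 : pi 0 = 0 by apply: (addrI (pi 0)); rewrite -hpi_add !addr0.
by elim/big_rec2: _ => [|i y1 y2 _ <-]; rewrite ?hpi_add.
Qed.

Lemma pi_comb k r : pi (comb (B k) r) = phi_p k (map_mx q r).
Proof. by rewrite pi_sum; apply: eq_bigr => l _; rewrite hpi_scale mxE. Qed.

Lemma phi_p_lin k : lin (phi_p k).
Proof.
move=> a u v; rewrite /phi_p scaler_sumr -big_split /=; apply: eq_bigr => l _.
by rewrite !mxE scalerDl scalerA.
Qed.

Lemma phi_p_trans k v : phi_p k v = phi_p k.+1 (v *m T_p k).
Proof.
have [r <-] := lift_row v.
by rewrite -pi_comb (comb_trans _ (B_trans k)) pi_comb map_mxM.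
Qed.

Lemma phi_p_surj y : exists k v, phi_p k v = y.
Proof.
have [x <-] := hpi_surj y; have [k [r ->]] := lspan_union x.
by exists k, (map_mx q r); rewrite pi_comb.
Qed.

Lemma phi_p_ker k v : phi_p k v = 0 -> exists j, v *m chain_mx T_p k j = 0.
Proof.
have [r <-] := lift_row v.
rewrite -pi_comb => /hpi_ker[z hz]; have [k' [w hw]] := lspan_union z.
set K := maxn k k'; have hk := leq_maxl k k'; have hk' := leq_maxr k k'.
have : comb (B K) (r *m chain_mx T k (K - k) - p%:R *: (w *m chain_mx T k' (K - k'))) = 0.
  have e := comb_chain k (K - k) r; have e' := comb_chain k' (K - k') w.
  rewrite !subnKC // in e e'.
  by rewrite (linB (comb_lin _)) (linZ (comb_lin _)) -e -e' -hw hz subrr.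
move/B_free/eqP; rewrite subr_eq0 => /eqP e; exists (K - k)%N.
have chain_map i j : map_mx q (chain_mx T i j) = chain_mx T_p i j.
  by elim: j => [|j IH] /=; rewrite ?map_mx1 // map_mxM IH.
have qp : q p%:R = 0 by apply/hq_ker; exists 1; rewrite mulr1.
by rewrite -chain_map -map_mxM e map_mxZ qp scale0r.
Qed.

Lemma reduction_colimit :
  countable_filtered_colimit_of_free_le N d /\ projdim_le1 N.
Proof.
split; [apply: (sequential_colimit (T := T_p)) |
        apply: (sequential_colimit_projdim_le1 (T := T_p))];
  by [apply: phi_p_lin | apply: phi_p_trans | apply: phi_p_surj | apply: phi_p_ker].
Qed.

End ReductionModP.

Unset Implicit Arguments.

Theorem lemma3p10 (p : nat) (hp : prime p)
    (R : idomainType) (hval : valuation_ring R) (hrank : finite_rank R)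
    (M : lmodType R) (htf : torsionfree M)
    (d : nat) (hdim : tensor_frac_dim M d)
    (Rp : comPzRingType) (q : {rmorphism R -> Rp})
    (hq_surj : forall y : Rp, exists a : R, q a = y)
    (hq_ker : forall a : R, q a = 0 <-> exists c : R, a = p%:R * c)
    (N : lmodType Rp) (pi : M -> N)
    (hpi_add : forall x y : M, pi (x + y) = pi x + pi y)
    (hpi_scale : forall (r : R) (x : M), pi (r *: x) = q r *: pi x)
    (hpi_surj : forall y : N, exists x : M, pi x = y)
    (hpi_ker : forall x : M, pi x = 0 <-> exists z : M, x = p%:R *: z) :
  countable_filtered_colimit_of_free_le N d /\ projdim_le1 N.
Proof.
have [m [m_free m_span]] := hdim.
have [c [c_lin c_inj]] := frac_coordinates htf m_free m_span.
have [n [h h_radicals]] := finite_rank_radicals hval hrank.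
have [G G_gen] := countably_generated hval c_lin c_inj h_radicals.
have [B [T BT]] := lattice_chain hval htf m_free m_span G.
apply: (@reduction_colimit p R M d B T G _ _ _ G_gen Rp q hq_surj hq_ker N pi
  hpi_add hpi_scale hpi_surj hpi_ker).
- by move=> k; case: (BT k) => [[free _] _ _].
- by move=> k; have [] := BT k.
by move=> i; have [] := BT i.
Qed.
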